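(* Let $s,t$ be positive integers and $k,l,r$ nonnegative integers. Put $$a=-\frac{l(s+t)+s}{s+t},\qquad b=\frac{k(s+t)+s}{s+t},$$ and define $$P(x)=\left(\frac{x+1}{2}\right)^{k(s+t)+s}J_{l+r}(a,b,x)^{s+t},\qquad Q(x)=\left(\frac{x-1}{2}\right)^{l(s+t)+s}J_{k+r}(-a,-b,x)^{s+t}.$$ Then $\deg(P-Q)\le m$, where $m=(k+l+r)(s+t-1)+s-r-1$.
   Context: For a nonnegative integer $N$ and complex parameters $\alpha,\beta$, the (generalized) Jacobi polynomial is $J_N(\alpha,\beta,x)=\sum_{j=0}^{N}\binom{N+\alpha+\beta+j}{j}\binom{N+\alpha}{N-j}\left(\frac{x-1}{2}\right)^j$, where $\binom{y}{j}=y(y-1)\cdots(y-j+1)/j!$ for arbitrary $y$. Here $a+b=k-l$. The polynomials $P,Q$ have degree $(s+t)(k+l+r)+s$ and $m$ equals this degree minus $k+l+2r+1$; this is the Davenport–Zannier pair for the ''odd double brush'' weighted tree. *)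

From mathcomp Require Import all_boot all_order all_algebra.
Set Implicit Arguments. Unset Strict Implicit. Unset Printing Implicit Defensive.
Import Order.TTheory GRing.Theory Num.Theory.
Local Open Scope ring_scope.

Definition gbinom (R : fieldType) (y : R) (j : nat) : R :=
  (\prod_(i < j) (y - i%:R)) / (j`!)%:R.

Definition jacobi (R : fieldType) (N : nat) (alpha beta : R) : {poly R} :=
  \sum_(j < N.+1)
     (gbinom (N%:R + alpha + beta + j%:R) j * gbinom (N%:R + alpha) (N - j)%N)
       *: ((2^-1) *: ('X - 1)) ^+ j.

From mathcomp Require Import all_boot all_order all_algebra.
From mathcomp Require Import ring zify.
Import Order.TTheory GRing.Theory Num.Theory.

(* In the variable y = (x - 1)/2, P - Q becomes p - q with p = (y + 1)^(A+1) J1^(n+1)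
   and q = y^(B+1) J2^(n+1), where n + 1 = s + t and J1, J2 are the two Jacobi
   polynomials written in y, of degrees N1 = l + r and N2 = k + r.  They solve
   hypergeometric equations with N2 = N1 + a + b, and this makes
   y (y + 1) W(J1, J2) + (a (y + 1) + b y) J1 J2 a constant, W denoting the
   Wronskian.  As (n + 1) a = -(B + 1) and (n + 1) b = A + 1, it follows that
   W(p, q) = (y + 1)^A y^B (J1 J2)^n times a constant.  Finally p and q have the
   same degree and leading coefficient, so deg W(p, q) = deg (p - q) + deg q - 1,
   and comparing the two expressions for deg W(p, q) bounds deg (p - q). *)

Set Implicit Arguments.
Unset Strict Implicit.
Unset Printing Implicit Defensive.
Local Open Scope ring_scope.

Section Char0Polynomials.

Variable R : idomainType.
Hypothesis charR0 : [pchar R] =i pred0.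
Implicit Types p q : {poly R}.

Lemma char0_natf_neq0 n : (0 < n)%N -> n%:R != 0 :> R.
Proof. by rewrite lt0n (pcharf0P R).1. Qed.

Lemma size_deriv p : size p^`() = (size p).-1.
Proof.
have [le_p1 | lt1p] := leqP (size p) 1.
  by rewrite -derivn1 derivn_poly0 // size_poly0; case: (size p) le_p1 => [|[]].
have [d sp] : exists d, size p = d.+2 by exists (size p).-2; lia.
rewrite /deriv sp size_poly_eq //= -mulr_natr mulf_neq0 ?char0_natf_neq0 //.
by rewrite -[d.+1]/(d.+2.-1) -sp -lead_coefE lead_coef_eq0 -size_poly_eq0 sp.
Qed.

Lemma lead_coef_deriv p : lead_coef p^`() = lead_coef p *+ (size p).-1.
Proof.
rewrite !lead_coefE size_deriv coef_deriv.
by case sp: (size p) => [|[|d]] //=; rewrite nth_default ?sp // mulr0n.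
Qed.

Lemma size_deriv_eq0 p : p^`() = 0 -> (size p <= 1)%N.
Proof.
by move=> p'0; have := size_deriv p; rewrite p'0 size_poly0; case: (size p) => [|[]].
Qed.

Lemma size_sub_same_lead p q :
  size p = size q -> lead_coef p = lead_coef q -> q != 0 -> (size (p - q)%R < size q)%N.
Proof.
move=> Esz Elead q0; rewrite (polySpred q0) ltnS.
apply/leq_sizeP => j; rewrite leq_eqVlt coefB => /predU1P [<- | lt_j].
  by rewrite -{1}Esz -!lead_coefE Elead subrr.
by rewrite !nth_default ?subrr // ?Esz (polySpred q0).
Qed.

Lemma size_sub_lead_neq p q :
  size p = size q -> lead_coef p != lead_coef q -> size (p - q) = size p.
Proof.
move=> Esz Elead; apply/anti_leq/andP; split.
  by rewrite (leq_trans (size_polyD _ _)) // size_polyN Esz maxnn.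
case sp: (size p) => [|d] //; rewrite ltnNge; apply/negP.
move=> /leq_sizeP /(_ d (leqnn d)) /eqP; rewrite coefB subr_eq0 => /eqP.
have -> : d = (size p).-1 by rewrite sp.
by rewrite {2}Esz -!lead_coefE; apply/eqP.
Qed.

Definition wronskian p q := p^`() * q - p * q^`().

Lemma wronskian_mul_exp (u v f g : {poly R}) a b n :
  wronskian (u ^+ a.+1 * f ^+ n.+1) (v ^+ b.+1 * g ^+ n.+1) =
  u ^+ a * v ^+ b * (f * g) ^+ n *
    (a.+1%:R * u^`() * v * f * g - b.+1%:R * u * v^`() * f * g
     + n.+1%:R * u * v * wronskian f g).
Proof. by rewrite /wronskian !derivM !deriv_exp /= exprMn !exprS; ring. Qed.

Lemma size_mul_succ p q a b :
  size p = a.+1 -> size q = b.+1 -> size (p * q) = (a + b).+1.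
Proof.
move=> sp sq; rewrite size_mul -?size_poly_gt0 ?sp ?sq //.
by rewrite addSn addnS.
Qed.

Lemma size_exp_succ p a n : size p = a.+1 -> size (p ^+ n) = (a * n).+1.
Proof.
move=> sp; have p0 : p != 0 by rewrite -size_poly_gt0 sp.
by rewrite -[LHS]prednK ?size_exp ?sp // size_poly_gt0 expf_neq0.
Qed.

Lemma size_wronskian_sub p q :
    size p = size q -> lead_coef p = lead_coef q -> p != q -> (1 < size q)%N ->
  size (wronskian p q) = ((size (p - q)%R).-1 + (size q).-1)%N.
Proof.
move=> Esz Elead neq_pq lt1q.
have q0 : q != 0 by rewrite -size_poly_gt0 ltnW.
have q'0 : q^`() != 0 by rewrite -size_poly_gt0 size_deriv -subn1 subn_gt0.
have lt_dq := size_sub_same_lead Esz Elead q0.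
have -> : wronskian p q = wronskian (p - q) q by rewrite /wronskian derivB; ring.
have d0 : p - q != 0 by rewrite subr_eq0.
move: (p - q : {poly R}) lt_dq d0 => d lt_dq d0.
have [le_d1 | lt1d] := leqP (size d) 1.
  rewrite /wronskian -derivn1 derivn_poly0 // mul0r sub0r size_polyN size_mul //.
  have sd1 : size d = 1%N by apply/anti_leq; rewrite le_d1 size_poly_gt0.
  by rewrite size_deriv sd1.
(* The leading coefficients of d' q and d q' are in the ratio deg d : deg q. *)
have d'0 : d^`() != 0 by rewrite -size_poly_gt0 size_deriv -subn1 subn_gt0.
have [e sd] : exists e, size d = e.+2 by exists (size d).-2; lia.
have [f sq] : exists f, size q = f.+2 by exists (size q).-2; lia.
rewrite size_sub_lead_neq ?size_mul // ?size_deriv; rewrite ?sd ?sq /= ?addnS //.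
rewrite sd sq in lt_dq.
rewrite !lead_coefM !lead_coef_deriv sd sq /= mulrnAl mulrnAr.
rewrite -(subnKC (_ : e.+1 <= f.+1)%N) ?mulrnDr; last lia.
rewrite -[X in X != _]addr0 (inj_eq (addrI _)) eq_sym -mulr_natr.
by rewrite !mulf_neq0 ?lead_coef_eq0 ?char0_natf_neq0 // subn_gt0.
Qed.

End Char0Polynomials.

Section ShiftedJacobi.

Variable R : fieldType.
Hypothesis charR0 : [pchar R] =i pred0.
Implicit Types (y al be : R) (f g : {poly R}).

Let natR_neq0 := char0_natf_neq0 charR0.

Lemma gbinom0 y : gbinom y 0 = 1.
Proof. by rewrite /gbinom big_ord0 fact0 divr1. Qed.

Lemma natf_fact_neq0 j : j`!%:R != 0 :> R.
Proof. by rewrite natR_neq0 ?fact_gt0. Qed.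

Lemma mul_gbinom_diag y j : j.+1%:R * gbinom (y + 1) j.+1 = (y + 1) * gbinom y j.
Proof.
rewrite /gbinom big_ord_recl /= subr0 factS natrM invfM.
under eq_bigr => i _ do rewrite /bump /= add1n -natr1 opprD addrACA subrr addr0.
by field; rewrite natf_fact_neq0 addrC natr1 natR_neq0.
Qed.

Lemma mul_gbinom_left y j : j.+1%:R * gbinom y j.+1 = (y - j%:R) * gbinom y j.
Proof.
rewrite /gbinom big_ord_recr /= factS natrM invfM.
by field; rewrite natf_fact_neq0 addrC natr1 natR_neq0.
Qed.

Lemma gbinom_nat K j : (j <= K)%N -> gbinom (K%:R : R) j = 'C(K, j)%:R.
Proof.
move=> le_jK; rewrite /gbinom; apply: (canLR (mulfK (natf_fact_neq0 j))).
rewrite -natrM bin_ffact ffact_prod natr_prod.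
by apply: eq_bigr => i _; rewrite natrB // (leq_trans (ltnW (ltn_ord i))).
Qed.

Definition jacobi_coef N al be j : R :=
  if (j <= N)%N then gbinom (N%:R + al + be + j%:R) j * gbinom (N%:R + al) (N - j) else 0.

Definition shifted_jacobi N al be : {poly R} := \poly_(j < N.+1) jacobi_coef N al be j.

Lemma coef_shifted_jacobi N al be j : (shifted_jacobi N al be)`_j = jacobi_coef N al be j.
Proof. by rewrite coef_poly ltnS /jacobi_coef; case: leqP. Qed.

Lemma jacobiE N al be : jacobi N al be = shifted_jacobi N al be \Po (2^-1 *: ('X - 1)).
Proof.
rewrite /jacobi /shifted_jacobi poly_def raddf_sum; apply: eq_bigr => i _.
by rewrite /= comp_polyZ comp_Xn_poly /jacobi_coef -ltnS ltn_ord.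
Qed.

Lemma jacobi_coefS N al be j :
  j.+1%:R * (j%:R + al + 1) * jacobi_coef N al be j.+1 =
  (N%:R - j%:R) * (N%:R + j%:R + al + be + 1) * jacobi_coef N al be j.
Proof.
rewrite /jacobi_coef; case: (ltngtP j N) => [lt_jN | lt_Nj | <-]; last 2 first.
- by rewrite !mulr0.
- by rewrite mulr0 subrr !mul0r.
have [d ->] : exists d, N = (j + d).+1 by exists (N - j.+1)%N; lia.
rewrite subSS subSn ?leq_addr // addKn.
set y := (j + d).+1%:R + al + be + j%:R; set z := (j + d).+1%:R + al.
have -> : (j + d).+1%:R + al + be + j.+1%:R = y + 1 by rewrite /y; ring.
transitivity ((j.+1%:R * gbinom (y + 1) j.+1) * ((j%:R + al + 1) * gbinom z d)); first ring.
transitivity ((d.+1%:R * gbinom z d.+1) * ((y + 1) * gbinom y j)); last first.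
  by rewrite /y /z; ring.
by rewrite mul_gbinom_diag mul_gbinom_left /z; ring.
Qed.

Lemma shifted_jacobi_ode N al be (J := shifted_jacobi N al be) :
  'X * ('X + 1) * J^`()^`() + ((al + 1)%:P + (al + be + 2)%:P * 'X) * J^`() =
  (N%:R * (N%:R + al + be + 1))%:P * J.
Proof.
have -> : 'X * ('X + 1) * J^`()^`() + ((al + 1)%:P + (al + be + 2)%:P * 'X) * J^`() =
    'X * ('X * J^`()^`()) + 'X * J^`()^`() + (al + 1)%:P * J^`()
    + (al + be + 2)%:P * ('X * J^`()) by ring.
apply/polyP => i; rewrite !(coefD, coefXM, coefCM, coef_deriv) !coef_shifted_jacobi.
transitivity (N%:R * (N%:R + al + be + 1) * jacobi_coef N al be i
  + (i.+1%:R * (i%:R + al + 1) * jacobi_coef N al be i.+1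
     - (N%:R - i%:R) * (N%:R + i%:R + al + be + 1) * jacobi_coef N al be i)).
  by case: i => [|[|i]] /=; ring.
by rewrite jacobi_coefS subrr addr0.
Qed.

Definition jacobi_wronskian al be f g :=
  'X * ('X + 1) * wronskian f g + (al%:P * ('X + 1) + be%:P * 'X) * f * g.

Lemma deriv_jacobi_wronskian N1 N2 al be : N1%:R + al + be = N2%:R ->
  (jacobi_wronskian al be (shifted_jacobi N1 al be) (shifted_jacobi N2 (- al) (- be)))^`() = 0.
Proof.
move=> HN.
have O1 := shifted_jacobi_ode N1 al be; have O2 := shifted_jacobi_ode N2 (- al) (- be).
set J1 := shifted_jacobi N1 al be in O1 *; set J2 := shifted_jacobi N2 (- al) (- be) in O2 *.
transitivity ((('X * ('X + 1) * J1^`()^`() + ((al + 1)%:P + (al + be + 2)%:P * 'X) * J1^`())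
    - (N1%:R * (N1%:R + al + be + 1))%:P * J1) * J2
  - J1 * (('X * ('X + 1) * J2^`()^`() + ((- al + 1)%:P + (- al + - be + 2)%:P * 'X) * J2^`())
    - (N2%:R * (N2%:R + - al + - be + 1))%:P * J2)); last first.
  by rewrite O1 O2 !subrr mul0r mulr0 subrr.
rewrite -HN /jacobi_wronskian /wronskian.
rewrite !(derivD, derivM, derivB, derivN, derivX, derivC).
rewrite !(polyCD, polyCN, polyCM, polyC_natr, polyC1).
ring.
Qed.

Lemma jacobi_coef_top N M al be :
  N%:R + al + be = M%:R -> jacobi_coef N al be N = 'C(N + M, N)%:R.
Proof.
rewrite /jacobi_coef leqnn subnn gbinom0 mulr1 -gbinom_nat ?leq_addr // natrD => <-.
by congr gbinom; ring.
Qed.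

Lemma size_shifted_jacobi N M al be :
  N%:R + al + be = M%:R -> size (shifted_jacobi N al be) = N.+1.
Proof.
by move=> HN; rewrite size_poly_eq //= (jacobi_coef_top HN) ?natR_neq0 ?bin_gt0 ?leq_addr.
Qed.

Lemma lead_coef_shifted_jacobi N M al be :
  N%:R + al + be = M%:R -> lead_coef (shifted_jacobi N al be) = 'C(N + M, N)%:R.
Proof.
by move=> HN; rewrite lead_coef_poly //= (jacobi_coef_top HN) ?natR_neq0 ?bin_gt0 ?leq_addr.
Qed.

Section JacobiPair.

Variables (n A B N1 N2 : nat) (al be : R).
Hypothesis Hal : n.+1%:R * al = - B.+1%:R.
Hypothesis Hbe : n.+1%:R * be = A.+1%:R.
Hypothesis Hdeg : (A + N1 * n.+1 = B + N2 * n.+1)%N.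

Let J1 := shifted_jacobi N1 al be.
Let J2 := shifted_jacobi N2 (- al) (- be).
Let p := ('X + 1) ^+ A.+1 * J1 ^+ n.+1.
Let q := 'X ^+ B.+1 * J2 ^+ n.+1.

Lemma jacobi_pair_index : N1%:R + al + be = N2%:R.
Proof.
apply: (mulfI (natR_neq0 (ltn0Sn n))); rewrite !mulrDr Hal Hbe.
have := congr1 (GRing.natmul (1 : R)) Hdeg; rewrite !natrD !natrM => E.
apply/eqP; rewrite -subr_eq0; apply/eqP.
transitivity ((A%:R + N1%:R * n.+1%:R) - (B%:R + N2%:R * n.+1%:R) : R); first ring.
by rewrite E subrr.
Qed.

Lemma wronskian_jacobi_pair :
  wronskian p q =
  ('X + 1) ^+ A * 'X ^+ B * (J1 * J2) ^+ n * (n.+1%:R *: jacobi_wronskian al be J1 J2).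
Proof.
have EA : A.+1%:R = n.+1%:R * be%:P :> {poly R}.
  by rewrite -polyC_natr -Hbe polyCM polyC_natr.
have EB : B.+1%:R = - (n.+1%:R * al%:P) :> {poly R}.
  by rewrite -polyC_natr -[B.+1%:R]opprK -Hal polyCN polyCM polyC_natr.
rewrite wronskian_mul_exp derivX derivD derivX derivC addr0 EA EB -mul_polyC polyC_natr.
by rewrite /jacobi_wronskian; ring.
Qed.

Lemma size_jacobi_pair_sub :
  p != q -> ((size (p - q)%R).-1 + N2 * n.+1 <= A + (N1 + N2) * n)%N.
Proof.
move=> neq_pq.
have HN := jacobi_pair_index.
have HN' : N2%:R + - al + - be = N1%:R by rewrite -HN; ring.
have sX1 : size ('X + 1 : {poly R}) = 2%N by rewrite -polyC1 size_XaddC.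
have sJ1 := size_shifted_jacobi HN; have sJ2 := size_shifted_jacobi HN'.
have sp : size p = (A.+1 + N1 * n.+1).+1.
  by rewrite (size_mul_succ (size_exp_succ _ sX1) (size_exp_succ _ sJ1)) mul1n.
have sq : size q = (B.+1 + N2 * n.+1).+1.
  by rewrite (size_mul_succ (size_polyXn _ _) (size_exp_succ _ sJ2)).
have lead_pq : lead_coef p = lead_coef q.
  rewrite !lead_coefM !lead_coef_exp lead_coefX -polyC1 lead_coefXaddC.
  rewrite (lead_coef_shifted_jacobi HN) (lead_coef_shifted_jacobi HN').
  by rewrite !expr1n !mul1r -(bin_sub (leq_addr N2 N1)) addKn addnC.
have Esz : size p = size q by rewrite sp sq !addSn Hdeg.
have := size_wronskian_sub charR0 Esz lead_pq neq_pq.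
rewrite wronskian_jacobi_pair sq => /(_ isT) sW.
have s_pre : size (('X + 1) ^+ A * 'X ^+ B * (J1 * J2) ^+ n) = (A + B + (N1 + N2) * n).+1.
  rewrite (size_mul_succ (size_mul_succ (size_exp_succ _ sX1) (size_polyXn _ _))
             (size_exp_succ _ (size_mul_succ sJ1 sJ2))).
  by rewrite mul1n.
have le_c1 : (size (n.+1%:R *: jacobi_wronskian al be J1 J2) <= 1)%N.
  exact: leq_trans (size_scale_leq _ _) (size_deriv_eq0 charR0 (deriv_jacobi_wronskian HN)).
have : ((size (p - q)%R).-1 + (B.+1 + N2 * n.+1) <= (A + B + (N1 + N2) * n).+1)%N.
  rewrite -sW; apply: leq_trans (size_polyMleq _ _) _.
  by rewrite s_pre addSn /= -[X in (_ <= X)%N]addn1 leq_add2l.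
lia.
Qed.

End JacobiPair.

Lemma size_half_shift : size (2^-1 *: ('X - 1) : {poly R}) = 2%N.
Proof. by rewrite size_scale ?invr_eq0 ?natR_neq0 // -polyC1 size_XsubC. Qed.

Lemma comp_XaddC_half_shift : ('X + 1) \Po (2^-1 *: ('X - 1)) = 2^-1 *: ('X + 1) :> {poly R}.
Proof.
rewrite rmorphD /= comp_polyX rmorph1 !scalerDr scalerN -addrA; congr (_ + _).
rewrite !alg_polyC -polyCN -polyC1 -polyCD; congr polyC.
by field; rewrite natR_neq0.
Qed.

End ShiftedJacobi.

Theorem mainTheorem5 (s t k l r : nat) (hs : (0 < s)%N) (ht : (0 < t)%N) :
  let a : rat := - ((l * (s + t) + s)%N%:R / (s + t)%N%:R) in
  let b : rat := (k * (s + t) + s)%N%:R / (s + t)%N%:R in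
  let P : {poly rat} := ((2^-1) *: ('X + 1)) ^+ (k * (s + t) + s)
                          * (jacobi (l + r) a b) ^+ (s + t) in
  let Q : {poly rat} := ((2^-1) *: ('X - 1)) ^+ (l * (s + t) + s)
                          * (jacobi (k + r) (- a) (- b)) ^+ (s + t) in
  let m : int := (k + l + r)%:Z * ((s + t)%:Z - 1) + s%:Z - r%:Z - 1 in
  ((size (P - Q))%:Z - 1 <= m)%R.
Proof.
cbv zeta.
set a := - _; set b := _ / _.
have [n st] : exists n, (s + t = n.+1)%N by exists (s + t).-1; lia.
have [A eA] : exists A, (k * n.+1 + s = A.+1)%N by exists (k * n.+1 + s).-1; lia.
have [B eB] : exists B, (l * n.+1 + s = B.+1)%N by exists (l * n.+1 + s).-1; lia.
have Ha : n.+1%:R * a = - B.+1%:R by rewrite /a st -eB mulrN mulrC divfK ?pnatr_eq0.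
have Hb : n.+1%:R * b = A.+1%:R by rewrite /b st -eA mulrC divfK ?pnatr_eq0.
have Hdeg : (A + (l + r) * n.+1 = B + (k + r) * n.+1)%N by nia.
rewrite -[2^-1 *: ('X - 1)]comp_polyX !jacobiE -(comp_XaddC_half_shift (pchar_num _)).
rewrite -!rmorphXn -!rmorphM -rmorphB (size_comp_poly2 _ (size_half_shift (pchar_num _))).
rewrite st eA eB; set p := ('X + 1) ^+ A.+1 * _; set q := 'X ^+ B.+1 * _.
have [-> | /(size_jacobi_pair_sub (pchar_num _) Ha Hb Hdeg)] := eqVneq p q.
  by rewrite subrr size_poly0; nia.
move: (size (p - q)) => d; nia.
Qed.
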